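(* If the aggregate channel matrix $\mathbf{H} = [\mathbf{h}_{1},\dots,\mathbf{h}_{K}] \in \mathbb{C}^{N \times K}$ has full column rank, then there always exists a beamforming point $\{\mathbf{w}_m\}_{m=1}^M$ that satisfies the SINR constraints $\frac{\lvert \mathbf{h}_k^H \mathbf{w}_m \rvert^2}{\sum_{j \neq m} \lvert \mathbf{h}_k^H \mathbf{w}_j \rvert^2 + \sigma_k^2} \geq \gamma_k$ for all $k \in \mathcal{G}_m$, $m \in \mathcal{M}$, and it is given by $$\mathbf{W} = [\mathbf{w}_1, \mathbf{w}_2, \dots, \mathbf{w}_M] = \mathbf{H}(\mathbf{H}^H\mathbf{H})^{-1} \mathbf{A},$$ where $\mathbf{A}$ is a $K \times M$ complex-valued matrix with $(k,m)$-th element $A_{k,m} = \sqrt{\gamma_k \sigma_k^2}\, e^{j \theta_{k}}$ if $k \in \mathcal{G}_m$ and $A_{k,m}=0$ otherwise, with $\theta_{k} \in [0, 2\pi]$ arbitrary. Further, if this point $\mathbf{W} = \mathbf{H}(\mathbf{H}^H\mathbf{H})^{-1} \mathbf{A}$ also satisfies the per-antenna peak power constraints $\sum_{m=1}^M \mathbf{w}_m^H \mathbf{R}_n \mathbf{w}_m \leq P_n$ for all $n \in \mathcal{N}$, then it is a feasible solution of the QoS problem (minimize $\sum_{m=1}^M \lVert \mathbf{w}_m \rVert_2^2$ subject to these SINR constraints and per-antenna peak power constraints).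
   Context: A transmitter with $N$ antennas serves $M$ multicast groups of single-antenna users; $\mathcal{G}_m$ is the set of users in group $m$, $\mathcal{M}=\{1,\dots,M\}$, $\mathcal{K}=\{1,\dots,K\}$ is the set of all users, the groups are disjoint and their union is $\mathcal{K}$, and $\mathcal{N}=\{1,\dots,N\}$. $\mathbf{w}_m \in \mathbb{C}^N$ is the beamforming vector of group $m$, $\mathbf{h}_k \in \mathbb{C}^N$ the channel of user $k$, $\sigma_k^2>0$ the noise variance at user $k$, $\gamma_k$ the SINR target of user $k$, $P_n$ the peak power of antenna $n$, and $\mathbf{R}_n \in \{0,1\}^{N\times N}$ the all-zero matrix except a 1 at the $n$-th diagonal entry. The SINR of user $k \in \mathcal{G}_m$ is $\lvert \mathbf{h}_k^H \mathbf{w}_m \rvert^2 / (\sum_{j \neq m} \lvert \mathbf{h}_k^H \mathbf{w}_j \rvert^2 + \sigma_k^2)$. *)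

From HB Require Import structures.
From mathcomp Require Import all_boot all_order all_algebra.
From mathcomp Require Import reals trigo.
From mathcomp Require Import complex.
Set Implicit Arguments. Unset Strict Implicit. Unset Printing Implicit Defensive.
Import Order.TTheory GRing.Theory Num.Theory.
Local Open Scope ring_scope.

Section MulticastDefs.
Variable R : realType.
Local Notation C := R[i].

Definition cabs2 (z : C) : R := let: Complex a b := z in a ^+ 2 + b ^+ 2.

Definition mxH (p q : nat) (A : 'M[C]_(p, q)) : 'M[C]_(q, p) :=
  map_mx (@conjc R) A^T.

Definition expj (t : R) : C := Complex (cos t) (sin t).

Variables (N K M : nat).

(* A_{k,m} = sqrt(gamma_k sigma_k^2) e^{j theta_k} if k in G_m, 0 otherwise;
   group membership is given by g : 'I_K -> 'I_M (k \in G_m <-> g k = m). *)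
Definition Amat (g : 'I_K -> 'I_M) (gamma sigma2 theta : 'I_K -> R)
  : 'M[C]_(K, M) :=
  \matrix_(k < K, m < M)
    if g k == m then (Num.sqrt (gamma k * sigma2 k))%:C%C * expj (theta k)
    else 0.

Definition Wzf (H : 'M[C]_(N, K)) (A : 'M[C]_(K, M)) : 'M[C]_(N, M) :=
  H *m invmx (mxH H *m H) *m A.

Definition hHw (H : 'M[C]_(N, K)) (W : 'M[C]_(N, M)) (k : 'I_K) (m : 'I_M) : C :=
  (mxH (col k H) *m col m W) 0 0.

Definition SINR (H : 'M[C]_(N, K)) (sigma2 : 'I_K -> R) (g : 'I_K -> 'I_M)
  (W : 'M[C]_(N, M)) (k : 'I_K) : R :=
  cabs2 (hHw H W k (g k)) /
  (\sum_(j < M | j != g k) cabs2 (hHw H W k j) + sigma2 k).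

Definition SINR_constraints (H : 'M[C]_(N, K)) (sigma2 gamma : 'I_K -> R)
  (g : 'I_K -> 'I_M) (W : 'M[C]_(N, M)) : Prop :=
  forall (m : 'I_M) (k : 'I_K), g k = m -> gamma k <= SINR H sigma2 g W k.

Definition Rsel (n : 'I_N) : 'M[C]_N := delta_mx n n.

(* sum_m w_m^H R_n w_m  (a real number; we take its real part) *)
Definition antenna_power (W : 'M[C]_(N, M)) (n : 'I_N) : R :=
  \sum_(m < M) complex.Re ((mxH (col m W) *m Rsel n *m col m W) 0 0).

Definition power_constraints (P : 'I_N -> R) (W : 'M[C]_(N, M)) : Prop :=
  forall n : 'I_N, antenna_power W n <= P n.

Definition QoS_feasible (H : 'M[C]_(N, K)) (sigma2 gamma : 'I_K -> R)
  (g : 'I_K -> 'I_M) (P : 'I_N -> R) (W : 'M[C]_(N, M)) : Prop :=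
  SINR_constraints H sigma2 gamma g W /\ power_constraints P W.

End MulticastDefs.

From HB Require Import structures.
From mathcomp Require Import all_boot all_order all_algebra.
From mathcomp Require Import reals trigo.
From mathcomp Require Import complex.
Import Order.TTheory GRing.Theory Num.Theory.
Local Open Scope ring_scope.

(* Since H has full column rank, the Gram matrix H^H H is invertible, so the
   zero-forcing precoder satisfies H^H W = A: user k receives exactly the entry
   A_{k,m} from group m.  All interference terms vanish and the SINR of user k
   is |A_{k,g k}|^2 / sigma_k^2 = gamma_k, whatever the phases theta_k,
   since |e^{j theta}| = 1. *)

Section ZeroForcing.
Variable R : realType.
Local Notation C := R[i].

Lemma mxHM (p q r : nat) (A : 'M[C]_(p, q)) (B : 'M[C]_(q, r)) :
  mxH (A *m B) = mxH B *m mxH A.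
Proof. by rewrite /mxH trmx_mul map_mxM. Qed.

Lemma mxHK (p q : nat) (A : 'M[C]_(p, q)) : mxH (mxH A) = A.
Proof. by apply/matrixP => i j; rewrite !mxE conjcK. Qed.

Lemma mxrank_mxH (p q : nat) (A : 'M[C]_(p, q)) : \rank (mxH A) = \rank A.
Proof. by rewrite /mxH mxrank_map mxrank_tr. Qed.

Lemma mulmx_mxH_eq0 (n : nat) (u : 'rV[C]_n) : (u *m mxH u == 0) = (u == 0).
Proof.
apply/eqP/eqP => [/matrixP/(_ 0 0)|->]; last by rewrite mul0mx.
rewrite !mxE => /eqP; rewrite psumr_eq0 => [/allP u0|j _]; last first.
  by rewrite !mxE; apply: mulcJ_ge0.
apply/rowP => j; have := u0 j (mem_index_enum _).
by rewrite /= !mxE mulf_eq0 conjc_eq0 orbb => /eqP.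
Qed.

Lemma gram_unitmx (p q : nat) (H : 'M[C]_(p, q)) :
  \rank H = q -> mxH H *m H \in unitmx.
Proof.
move=> rankH; rewrite -row_free_unit; apply: inj_row_free => v.
rewrite mulmxA => vGram0.
have vHH0 : v *m mxH H = 0.
  by apply/eqP; rewrite -mulmx_mxH_eq0 mxHM mxHK mulmxA vGram0 mul0mx.
have freeHH : row_free (mxH H) by rewrite /row_free mxrank_mxH rankH.
by apply: (row_free_inj freeHH); rewrite /= vHH0 mul0mx.
Qed.

Lemma mxH_mul_Wzf (p q r : nat) (H : 'M[C]_(p, q)) (A : 'M[C]_(q, r)) :
  \rank H = q -> mxH H *m Wzf H A = A.
Proof. by move=> rankH; rewrite /Wzf !mulmxA mulmxV ?gram_unitmx ?mul1mx. Qed.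

Lemma hHwE (p q r : nat) (H : 'M[C]_(p, q)) (W : 'M[C]_(p, r)) k m :
  hHw H W k m = (mxH H *m W) k m.
Proof. by rewrite /hHw !mxE; apply: eq_bigr => j _; rewrite !mxE. Qed.

Lemma cabs2_scale_expj (a t : R) : cabs2 (a%:C%C * expj t) = a ^+ 2.
Proof.
rewrite /expj /cabs2 /= !mul0r subr0 addr0 !exprMn -mulrDr.
by rewrite cos2Dsin2 mulr1.
Qed.

Lemma SINR_interference_free (p q r : nat) (H : 'M[C]_(p, q))
    (sigma2 : 'I_q -> R) (g : 'I_q -> 'I_r) (W : 'M[C]_(p, r)) k :
  (forall j, j != g k -> hHw H W k j = 0) ->
  SINR H sigma2 g W k = cabs2 (hHw H W k (g k)) / sigma2 k.
Proof.
move=> no_interference; rewrite /SINR big1 ?add0r // => j /no_interference->.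
by rewrite /cabs2 /= !expr2 !mul0r addr0.
Qed.

End ZeroForcing.

Theorem lemma1 (R : realType) (N K M : nat) (H : 'M[R[i]]_(N, K))
  (g : 'I_K -> 'I_M) (sigma2 gamma theta : 'I_K -> R) (P : 'I_N -> R) :
  \rank H = K ->
  (forall k, 0 < sigma2 k) ->
  (forall k, 0 <= gamma k) ->
  (forall k, 0 <= theta k <= 2 * pi) ->
  let W := Wzf H (Amat g gamma sigma2 theta) in
  SINR_constraints H sigma2 gamma g W /\
  (power_constraints P W -> QoS_feasible H sigma2 gamma g P W).
Proof.
move=> rankH sigma2_gt0 gamma_ge0 _ W.
have hHwA k m : hHw H W k m = Amat g gamma sigma2 theta k m.
  by rewrite hHwE mxH_mul_Wzf.
have SINR_ok : SINR_constraints H sigma2 gamma g W.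
  move=> m k _; rewrite SINR_interference_free => [|j]; last first.
    by rewrite hHwA mxE eq_sym => /negbTE->.
  rewrite hHwA mxE eqxx cabs2_scale_expj sqr_sqrtr; last first.
    by rewrite mulr_ge0 ?gamma_ge0 ?ltW.
  by rewrite mulfK ?lt0r_neq0.
by split=> // power_ok; split.
Qed.
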